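(* Let $\alpha>0$ be a constant and let $n$ be an integer with \[ 3 \le n < 10+4\alpha . \] Then the solution curve of the generalized Gelfand problem \[ u''+\frac{n-1}{r}u'+\lambda r^{\alpha}e^{u}=0 \quad (0<r<1), \qquad u'(0)=0,\quad u(1)=0, \] makes infinitely many turns. That is, with $w$ and $\lambda(t)$ as in the context, $\lambda'(t)$ changes sign infinitely many times on $(0,\infty)$.
   Context: Here $\lambda>0$ is a parameter. Let $w(t)$ be the solution of the initial value problem \[ w''+\frac{n-1}{t}w'+t^{\alpha}e^{w}=0, \qquad w(0)=0,\quad w'(0)=0 \qquad (t>0). \] This solution is negative and decreasing and is defined for all $t>0$. For each $t>0$, the function $u(r)=w(tr)-w(t)$ solves the boundary value problem with $\lambda=\lambda(t):=t^{\alpha+2}e^{w(t)}$, and all solutions arise in this way. The solution curve is the parametrized curve \[ t\mapsto(\lambda,u(0))=\bigl(t^{\alpha+2}e^{w(t)},\,-w(t)\bigr), \qquad t\in(0,\infty). \] A turn of the curve is a change of sign of $\lambda'(t)$. *)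

From Stdlib Require Import Reals Lra.
From Coquelicot Require Import Coquelicot.
Open Scope R_scope.

Definition gelfand_ivp_solution (n : nat) (alpha : R) (w : R -> R) : Prop :=
  w 0 = 0 /\
  filterlim (fun h => (w h - w 0) / h) (at_right 0) (locally 0) /\
  (forall t, 0 < t -> ex_derive w t /\ ex_derive (Derive w) t /\
     Derive (Derive w) t + (INR n - 1) / t * Derive w t
       + Rpower t alpha * exp (w t) = 0).

Definition lambda_of (alpha : R) (w : R -> R) (t : R) : R :=
  Rpower t (alpha + 2) * exp (w t).

Definition infinitely_many_sign_changes (f : R -> R) : Prop :=
  forall N : nat, exists ts : nat -> R,
    (forall i, (i <= N)%nat -> 0 < ts i) /\
    (forall i, (i < N)%nat -> ts i < ts (S i) /\ f (ts i) * f (ts (S i)) < 0).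

From Stdlib Require Import Reals Lra Lia Classical.
From Coquelicot Require Import Coquelicot.
Open Scope R_scope.

(* With [t = e^s] and [x(s) = ln (lambda(t) / k)], where [k = (n-2)(alpha+2)], the Gelfand
   equation becomes the damped oscillator [x'' + (n-2) x' + k (e^x - 1) = 0], and [lambda'(t)]
   has the sign of [x'(ln t)].  The bound [n < 10 + 4 alpha] says [(n-2)^2 < 4k]: the rest
   point is an underdamped focus.  If [x'] eventually kept one sign, [x] would be monotone and
   pushed towards [0] from one side; a Prüfer-angle (Sturm comparison) argument with restoring
   coefficient [k (e^x - 1) / x > (n-2)^2/4] then forces [x] to vanish again.  The trajectory
   is never at rest: by a weighted energy, a solution at rest at some time vanishes identically
   before it, whereas [x(s) < 0] for [s] near [-oo]. *)

Lemma increment_ge_of_derive_ge (f df : R -> R) (S m : R) :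
  (forall s, S <= s -> is_derive f s (df s)) ->
  (forall s, S <= s -> m <= df s) ->
  forall u v, S <= u -> u <= v -> f u + m * (v - u) <= f v.
Proof.
  intros Hd Hm u v Hu Huv.
  destruct (MVT_gen f u v df) as [c [Hc Hinc]].
  - intros y Hy; apply Hd; rewrite Rmin_left in Hy; lra.
  - intros y Hy; rewrite Rmin_left, Rmax_right in Hy by lra.
    apply derivable_continuous_pt; exists (df y).
    apply is_derive_Reals, Hd; lra.
  - rewrite Rmin_left, Rmax_right in Hc by lra.
    assert (m * (v - u) <= df c * (v - u)) by (apply Rmult_le_compat_r; [lra | apply Hm; lra]).
    lra.
Qed.

Lemma eventually_ge_of_derive_ge (f df : R -> R) (S m : R) :
  0 < m ->
  (forall s, S <= s -> is_derive f s (df s)) ->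
  (forall s, S <= s -> m <= df s) ->
  forall B, exists T, S <= T /\ forall v, T <= v -> B <= f v.
Proof.
  intros Hm Hd Hdm B.
  set (g := Rabs (B - f S) / m).
  assert (Hg : 0 <= g) by (apply Rdiv_le_0_compat; [apply Rabs_pos | lra]).
  exists (S + g). split; [lra |]. intros v Hv.
  assert (Hmg : m * g = Rabs (B - f S)) by (unfold g; field; lra).
  assert (m * g <= m * (v - S)) by (apply Rmult_le_compat_l; lra).
  pose proof (Rle_abs (B - f S)).
  pose proof (increment_ge_of_derive_ge f df S m Hd Hdm S v (Rle_refl S) ltac:(lra)).
  lra.
Qed.

Lemma is_derive_local_max (f : R -> R) (a b c l : R) :
  is_derive f c l -> a < c < b -> (forall y, a < y < b -> f y <= f c) -> l = 0.
Proof.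
  intros Hd Hc Hmax.
  apply (deriv_maximum f a b c (exist _ l (proj1 (is_derive_Reals f c l) Hd)));
    [lra | lra | intros y Hy1 Hy2; apply Hmax; lra].
Qed.

Lemma is_derive_local_min (f : R -> R) (a b c l : R) :
  is_derive f c l -> a < c < b -> (forall y, a < y < b -> f c <= f y) -> l = 0.
Proof.
  intros Hd Hc Hmin.
  apply (deriv_minimum f a b c (exist _ l (proj1 (is_derive_Reals f c l) Hd)));
    [lra | lra | intros y Hy1 Hy2; apply Hmin; lra].
Qed.

(* Prüfer angle: [u = -x1/x - a/2] solves [u' = u^2 + q - a^2/4], so [atan u] grows at a
   linear rate and cannot stay in [(-PI/2, PI/2)] forever. *)
Lemma sturm_vanishes_eventually (a K S : R) (x x1 q : R -> R) :
  a * a / 4 < K ->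
  (forall s, S <= s -> is_derive x s (x1 s)) ->
  (forall s, S <= s -> is_derive x1 s (- a * x1 s - q s * x s)) ->
  (forall s, S <= s -> K <= q s) ->
  ~ (forall s, S <= s -> x s <> 0).
Proof.
  intros HK Dx Dx1 Hq Hx.
  set (m := Rmin 1 (K - a * a / 4)).
  assert (Hm : 0 < m) by (apply Rmin_pos; lra).
  assert (Hm1 : m <= 1) by apply Rmin_l.
  assert (HmK : m <= K - a * a / 4) by apply Rmin_r.
  set (u := fun s => - x1 s / x s - a / 2).
  set (du := fun s => (u s ^ 2 + q s - a * a / 4) / (1 + u s ^ 2)).
  assert (Hdu : forall s, S <= s -> is_derive (fun s => atan (u s)) s (du s)).
  { intros s Hs. pose proof (Hx s Hs) as Hxs. unfold du, u.
    auto_derive.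
    - repeat split; [eexists; apply Dx1, Hs | eexists; apply Dx, Hs | exact Hxs].
    - rewrite (is_derive_unique (fun y : R => x y) s _ (Dx s Hs)),
        (is_derive_unique (fun y : R => x1 y) s _ (Dx1 s Hs)).
      field. split; [exact Hxs |].
      apply Rgt_not_eq, Rplus_lt_le_0_compat; [apply pow2_gt_0; lra | apply pow2_ge_0]. }
  assert (Hdum : forall s, S <= s -> m <= du s).
  { intros s Hs. unfold du.
    pose proof (Hq s Hs). pose proof (pow2_ge_0 (u s)).
    apply Rle_div_r; nra. }
  assert (Hinc := increment_ge_of_derive_ge _ _ S m Hdu Hdum S (S + PI / m)).
  assert (0 < PI / m) by (apply Rdiv_lt_0_compat; [apply PI_RGT_0 | lra]).
  specialize (Hinc (Rle_refl S) ltac:(lra)).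
  replace (m * (S + PI / m - S)) with PI in Hinc by (field; lra).
  pose proof (atan_bound (u S)). pose proof (atan_bound (u (S + PI / m))).
  lra.
Qed.

Lemma exp_le_compat (u v : R) : u <= v -> exp u <= exp v.
Proof. intros [Huv | ->]; [left; apply exp_increasing, Huv | apply Rle_refl]. Qed.

Lemma exp_sub1_div_ge1 (y : R) : 0 < y -> 1 <= (exp y - 1) / y.
Proof.
  intros Hy. apply Rle_div_r; [lra|].
  pose proof (exp_ineq1_le y). lra.
Qed.

Lemma exp_le_exp_sub1_div (y : R) : y < 0 -> exp y <= (exp y - 1) / y.
Proof.
  intros Hy.
  replace ((exp y - 1) / y) with ((1 - exp y) / - y) by (field; lra).
  apply Rle_div_r; [lra|].
  pose proof (exp_ineq1_le (- y)).
  assert (Hinv : exp (- y) * exp y = 1) by (rewrite <- exp_plus, Rplus_opp_l; apply exp_0).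
  pose proof (exp_pos y). nra.
Qed.

Section DampedOscillator.

Variables (a k : R) (x x1 : R -> R).
Hypotheses (Ha : 0 < a) (Hk : 0 < k).
Hypothesis Dx : forall s, is_derive x s (x1 s).
Hypothesis Dx1 : forall s, is_derive x1 s (- a * x1 s - k * (exp (x s) - 1)).

Lemma Derive_x (s : R) : Derive (fun y => x y) s = x1 s.
Proof. exact (is_derive_unique _ _ _ (Dx s)). Qed.

Lemma Derive_x1 (s : R) : Derive (fun y => x1 y) s = - a * x1 s - k * (exp (x s) - 1).
Proof. exact (is_derive_unique _ _ _ (Dx1 s)). Qed.

Lemma ex_derive_x (s : R) : ex_derive (fun y => x y) s.
Proof. eexists; apply Dx. Qed.

Lemma ex_derive_x1 (s : R) : ex_derive (fun y => x1 y) s.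
Proof. eexists; apply Dx1. Qed.

(* The energy [x1^2/2 + k (e^x - 1 - x)], weighted by [e^(2 a s)], is nondecreasing;
   it vanishes at a rest point, hence is nonpositive, hence zero, before it. *)
Lemma zero_before_rest_point (s1 : R) :
  x s1 = 0 -> x1 s1 = 0 -> forall s, s <= s1 -> x s = 0.
Proof.
  intros Hx0 Hx10 s Hs.
  set (E := fun s => x1 s ^ 2 / 2 + k * (exp (x s) - 1 - x s)).
  set (dF := fun s => 2 * a * k * (exp (x s) - 1 - x s) * exp (2 * a * s)).
  assert (Hd : forall y, s <= y -> is_derive (fun y => E y * exp (2 * a * y)) y (dF y)).
  { intros y _. unfold E, dF. auto_derive.
    - repeat split; auto using ex_derive_x, ex_derive_x1.
    - rewrite Derive_x, Derive_x1. field. }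
  assert (HdF : forall y, s <= y -> 0 <= dF y).
  { intros y _. unfold dF.
    pose proof (exp_ineq1_le (x y)). pose proof (exp_pos (2 * a * y)).
    apply Rmult_le_pos; [|lra]. apply Rmult_le_pos; nra. }
  pose proof (increment_ge_of_derive_ge _ _ s 0 Hd HdF s s1 (Rle_refl s) Hs) as Hmono.
  cbv beta in Hmono.
  assert (HE1 : E s1 = 0) by (unfold E; rewrite Hx0, Hx10, exp_0; field).
  rewrite HE1 in Hmono.
  pose proof (exp_pos (2 * a * s)).
  assert (HEs : E s <= 0) by nra.
  unfold E in HEs.
  destruct (Req_dec (x s) 0) as [|Hne]; [assumption|].
  pose proof (exp_ineq1 _ Hne). pose proof (pow2_ge_0 (x1 s)). nra.
Qed.

(* While [x <= th < 0], [(x1 + a x)' = -k (e^x - 1)] is bounded below by a positive constant,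
   so [x1] eventually exceeds [1] and [x] passes [th]. *)
Lemma exceeds_neg_level (th S : R) : th < 0 -> exists s, S <= s /\ th < x s.
Proof.
  intros Hth. apply NNPP. intros Hbelow.
  assert (Hle : forall s, S <= s -> x s <= th).
  { intros s Hs. apply Rnot_lt_le. intros Hlt. apply Hbelow. exists s. auto. }
  set (mu := k * (1 - exp th)).
  assert (Hmu : 0 < mu).
  { unfold mu. assert (exp th < 1) by (rewrite <- exp_0; apply exp_increasing, Hth). nra. }
  destruct (eventually_ge_of_derive_ge (fun s => x1 s + a * x s)
              (fun s => - k * (exp (x s) - 1)) S mu Hmu) with (B := 1 + a * th)
    as [T [HT Hy]].
  { intros s _. auto_derive.
    - auto using ex_derive_x, ex_derive_x1.
    - rewrite Derive_x, Derive_x1. ring. }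
  { intros s Hs. pose proof (Hle s Hs).
    assert (exp (x s) <= exp th) by (apply exp_le_compat; assumption). unfold mu. nra. }
  destruct (eventually_ge_of_derive_ge x x1 T 1 Rlt_0_1) with (B := th + 1)
    as [T' [HT' Hx]].
  { intros s _. apply Dx. }
  { intros s Hs. pose proof (Hy s Hs). pose proof (Hle s ltac:(lra)). nra. }
  pose proof (Hx T' (Rle_refl T')). pose proof (Hle T' ltac:(lra)). lra.
Qed.

Lemma below_pos_level (th S : R) : 0 < th -> exists s, S <= s /\ x s < th.
Proof.
  intros Hth. apply NNPP. intros Habove.
  assert (Hge : forall s, S <= s -> th <= x s).
  { intros s Hs. apply Rnot_lt_le. intros Hlt. apply Habove. exists s. auto. }
  set (mu := k * (exp th - 1)).
  assert (Hmu : 0 < mu).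
  { unfold mu. assert (1 < exp th) by (rewrite <- exp_0; apply exp_increasing, Hth). nra. }
  destruct (eventually_ge_of_derive_ge (fun s => - (x1 s + a * x s))
              (fun s => k * (exp (x s) - 1)) S mu Hmu) with (B := 1 - a * th)
    as [T [HT Hy]].
  { intros s _. auto_derive.
    - auto using ex_derive_x, ex_derive_x1.
    - rewrite Derive_x, Derive_x1. ring. }
  { intros s Hs. pose proof (Hge s Hs).
    assert (exp th <= exp (x s)) by (apply exp_le_compat; assumption). unfold mu. nra. }
  destruct (eventually_ge_of_derive_ge (fun s => - x s) (fun s => - x1 s) T 1 Rlt_0_1)
    with (B := 1 - th) as [T' [HT' Hx]].
  { intros s _. auto_derive; [apply ex_derive_x | rewrite Derive_x; ring]. }
  { intros s Hs. pose proof (Hy s Hs). pose proof (Hge s ltac:(lra)). nra. }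
  pose proof (Hx T' (Rle_refl T')). pose proof (Hge T' ltac:(lra)). lra.
Qed.

Hypothesis Hunderdamped : a * a < 4 * k.
Hypothesis Hnot_at_rest : forall s, x s = 0 -> x1 s = 0 -> False.

Lemma sturm_restoring (S K : R) :
  a * a / 4 < K ->
  ~ (forall s, S <= s -> x s <> 0 /\ K <= k * (exp (x s) - 1) / x s).
Proof.
  intros HK H.
  apply (sturm_vanishes_eventually a K S x x1 (fun s => k * (exp (x s) - 1) / x s) HK).
  - intros s _. apply Dx.
  - intros s Hs. destruct (H s Hs) as [Hne _].
    replace (- a * x1 s - k * (exp (x s) - 1) / x s * x s)
      with (- a * x1 s - k * (exp (x s) - 1)) by (field; exact Hne).
    apply Dx1.
  - intros s Hs. apply H, Hs.
  - intros s Hs. apply H, Hs.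
Qed.

Lemma not_eventually_increasing (S : R) : ~ (forall s, S <= s -> 0 <= x1 s).
Proof.
  intros Hinc.
  assert (Hmono : forall u v, S <= u -> u <= v -> x u <= x v).
  { intros u v Hu Huv.
    pose proof (increment_ge_of_derive_ge x x1 S 0 (fun s _ => Dx s) Hinc u v Hu Huv). lra. }
  assert (Hnonpos : forall s, S <= s -> x s <= 0).
  { intros s0 Hs0. apply Rnot_lt_le. intros Hpos.
    destruct (below_pos_level (x s0) s0 Hpos) as [s [Hs Hlt]].
    pose proof (Hmono s0 s Hs0 Hs). lra. }
  assert (Hneg : forall s, S < s -> x s < 0).
  { intros s1 Hs1. destruct (Hnonpos s1 ltac:(lra)) as [|Hz]; [assumption|].
    exfalso. apply (Hnot_at_rest s1 Hz).
    apply (is_derive_local_max x S (s1 + 1) s1); [apply Dx | lra |].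
    intros y Hy. rewrite Hz. apply Hnonpos. lra. }
  set (K := (a * a / 4 + k) / 2).
  assert (HK : 0 < K < k) by (unfold K; nra).
  set (th := ln (K / k)).
  assert (Hexp : k * exp th = K).
  { unfold th. rewrite exp_ln; [field | apply Rdiv_lt_0_compat]; lra. }
  assert (Hth : th < 0).
  { apply Rnot_le_lt. intros Hth. pose proof (exp_le_compat 0 th Hth).
    rewrite exp_0 in *. nra. }
  destruct (exceeds_neg_level th (S + 1) Hth) as [S1 [HS1 Hx]].
  apply (sturm_restoring S1 K); [unfold K; lra|].
  intros s Hs. pose proof (Hneg s ltac:(lra)). pose proof (Hmono S1 s ltac:(lra) Hs).
  split; [lra|]. rewrite <- Hexp.
  replace (k * (exp (x s) - 1) / x s) with (k * ((exp (x s) - 1) / x s)) by (field; lra).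
  apply Rmult_le_compat_l; [lra|].
  apply Rle_trans with (exp (x s)); [apply exp_le_compat | apply exp_le_exp_sub1_div]; lra.
Qed.

Lemma not_eventually_decreasing (S : R) : ~ (forall s, S <= s -> x1 s <= 0).
Proof.
  intros Hdec.
  assert (Hanti : forall u v, S <= u -> u <= v -> x v <= x u).
  { intros u v Hu Huv.
    assert (Hd : forall s, S <= s -> is_derive (fun s => - x s) s (- x1 s)).
    { intros s _. auto_derive; [apply ex_derive_x | rewrite Derive_x; ring]. }
    assert (Hd0 : forall s, S <= s -> 0 <= - x1 s) by (intros s Hs; pose proof (Hdec s Hs); lra).
    pose proof (increment_ge_of_derive_ge _ _ S 0 Hd Hd0 u v Hu Huv). lra. }
  assert (Hnonneg : forall s, S <= s -> 0 <= x s).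
  { intros s0 Hs0. apply Rnot_lt_le. intros Hneg.
    destruct (exceeds_neg_level (x s0) s0 Hneg) as [s [Hs Hgt]].
    pose proof (Hanti s0 s Hs0 Hs). lra. }
  assert (Hpos : forall s, S < s -> 0 < x s).
  { intros s1 Hs1. destruct (Hnonneg s1 ltac:(lra)) as [|Hz]; [assumption|].
    exfalso. apply (Hnot_at_rest s1 (eq_sym Hz)).
    apply (is_derive_local_min x S (s1 + 1) s1); [apply Dx | lra |].
    intros y Hy. rewrite <- Hz. apply Hnonneg. lra. }
  apply (sturm_restoring (S + 1) k); [lra|].
  intros s Hs. pose proof (Hpos s ltac:(lra)). split; [lra|].
  replace (k * (exp (x s) - 1) / x s) with (k * ((exp (x s) - 1) / x s)) by (field; lra).
  rewrite <- (Rmult_1_r k) at 1.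
  apply Rmult_le_compat_l; [lra | apply exp_sub1_div_ge1; lra].
Qed.

Lemma derivative_changes_sign (S : R) :
  (exists s, S < s /\ 0 < x1 s) /\ (exists s, S < s /\ x1 s < 0).
Proof.
  split; apply NNPP; intros Hnone.
  - apply (not_eventually_decreasing (S + 1)). intros s Hs.
    apply Rnot_lt_le. intros Hlt. apply Hnone. exists s. split; [lra | exact Hlt].
  - apply (not_eventually_increasing (S + 1)). intros s Hs.
    apply Rnot_lt_le. intros Hlt. apply Hnone. exists s. split; [lra | exact Hlt].
Qed.

End DampedOscillator.

(* The first point has the sign opposite to [y], which lets the induction prepend a point. *)
Lemma sign_changes_after (f : R -> R) :
  (forall T, exists t, T < t /\ 0 < f t) ->
  (forall T, exists t, T < t /\ f t < 0) ->
  forall N T y, y <> 0 -> exists ts : nat -> R,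
    y * f (ts 0%nat) < 0 /\
    (forall i, (i <= N)%nat -> T < ts i) /\
    (forall i, (i < N)%nat -> ts i < ts (S i) /\ f (ts i) * f (ts (S i)) < 0).
Proof.
  intros Hpos Hneg.
  assert (Hopp : forall T y, y <> 0 -> exists t, T < t /\ y * f t < 0).
  { intros T y Hy. destruct (Rlt_or_le 0 y).
    - destruct (Hneg T) as [t [Ht Hft]]. exists t. split; [exact Ht | nra].
    - destruct (Hpos T) as [t [Ht Hft]]. exists t. split; [exact Ht |].
      assert (y < 0) by lra. nra. }
  intros N. induction N as [|N IH]; intros T y Hy;
    destruct (Hopp T y Hy) as [t [Ht Hyt]].
  - exists (fun _ => t). split; [exact Hyt | split; [intros; exact Ht | intros i Hi; lia]].
  - assert (Hft : f t <> 0) by (intros Hz; rewrite Hz in Hyt; lra).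
    destruct (IH t (f t) Hft) as [ts [Hts0 [Hgt Hchain]]].
    exists (fun i => match i with O => t | S j => ts j end).
    split; [exact Hyt | split].
    + intros [|i] Hi; [exact Ht |]. pose proof (Hgt i ltac:(lia)). lra.
    + intros [|i] Hi.
      * split; [apply Hgt; lia | exact Hts0].
      * apply Hchain. lia.
Qed.

Lemma infinitely_many_sign_changes_intro (f : R -> R) :
  (forall T, exists t, T < t /\ 0 < f t) ->
  (forall T, exists t, T < t /\ f t < 0) ->
  infinitely_many_sign_changes f.
Proof.
  intros Hpos Hneg N.
  destruct (sign_changes_after f Hpos Hneg N 0 1 R1_neq_R0) as [ts [_ [Hgt Hchain]]].
  exists ts. split; [exact Hgt | exact Hchain].
Qed.

Lemma lambda_of_pos (alpha : R) (w : R -> R) (t : R) : 0 < lambda_of alpha w t.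
Proof. unfold lambda_of, Rpower. apply Rmult_lt_0_compat; apply exp_pos. Qed.

Section EmdenFowler.

Variables (alpha : R) (n : nat) (w : R -> R).
Hypotheses (Halpha : 0 < alpha) (Hn : (3 <= n)%nat).
Hypothesis Hode : forall t, 0 < t ->
  ex_derive w t /\ ex_derive (Derive w) t /\
  Derive (Derive w) t + (INR n - 1) / t * Derive w t + Rpower t alpha * exp (w t) = 0.

Definition damping : R := INR n - 2.
Definition stiffness : R := (INR n - 2) * (alpha + 2).

Definition emden_x (s : R) : R := w (exp s) + (alpha + 2) * s - ln stiffness.
Definition emden_x1 (s : R) : R := exp s * Derive w (exp s) + (alpha + 2).

Lemma damping_pos : 0 < damping.
Proof. unfold damping. apply le_INR in Hn. simpl in Hn. lra. Qed.

Lemma stiffness_pos : 0 < stiffness.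
Proof. pose proof damping_pos. unfold damping, stiffness in *. nra. Qed.

Lemma underdamped : INR n < 10 + 4 * alpha -> damping * damping < 4 * stiffness.
Proof. pose proof damping_pos. unfold damping, stiffness in *. intros. nra. Qed.

Lemma emden_x_derive (s : R) : is_derive emden_x s (emden_x1 s).
Proof.
  destruct (Hode (exp s) (exp_pos s)) as [Dw [DDw _]].
  unfold emden_x, emden_x1. auto_derive; [auto |]. change (fun y => w y) with w. ring.
Qed.

Lemma emden_x1_derive (s : R) :
  is_derive emden_x1 s (- damping * emden_x1 s - stiffness * (exp (emden_x s) - 1)).
Proof.
  destruct (Hode (exp s) (exp_pos s)) as [Dw [DDw Heq]].
  pose proof damping_pos. pose proof stiffness_pos. pose proof (exp_pos s).
  unfold emden_x, emden_x1. auto_derive; [auto |].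
  change (fun y => Derive w y) with (Derive w).
  replace (Derive (Derive w) (exp s)) with
    (- ((INR n - 1) / exp s * Derive w (exp s)) - Rpower (exp s) alpha * exp (w (exp s)))
    by lra.
  unfold Rpower. rewrite ln_exp.
  replace (w (exp s) + (alpha + 2) * s - ln stiffness)
    with (w (exp s) + alpha * s + s + s + - ln stiffness) by ring.
  rewrite !exp_plus, exp_Ropp, exp_ln by lra.
  unfold damping, stiffness in *. field. repeat split; lra.
Qed.

Lemma Derive_lambda_exp (s : R) :
  Derive (lambda_of alpha w) (exp s) = lambda_of alpha w (exp s) / exp s * emden_x1 s.
Proof.
  destruct (Hode (exp s) (exp_pos s)) as [Dw _].
  pose proof (exp_pos s).
  apply is_derive_unique. unfold lambda_of, Rpower, emden_x1.
  auto_derive.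
  - repeat split; auto.
  - change (fun y => w y) with w. field. lra.
Qed.

Hypothesis Hw0 : w 0 = 0.
Hypothesis Hwlim : filterlim (fun h => (w h - w 0) / h) (at_right 0) (locally 0).

Lemma w_lt_1_near_0 : exists d, 0 < d /\ forall h, 0 < h < d -> w h < 1.
Proof.
  destruct (proj1 (filterlim_locally _ _) Hwlim (mkposreal 1 Rlt_0_1)) as [d Hd].
  exists (Rmin d 1). split; [apply Rmin_pos; [apply cond_pos | lra] |].
  intros h [Hh Hhd].
  pose proof (Rmin_l d 1). pose proof (Rmin_r d 1).
  assert (Hball : Rabs (h - 0) < d) by (rewrite Rminus_0_r, Rabs_right; lra).
  specialize (Hd h Hball Hh).
  change (Rabs ((w h - w 0) / h - 0) < 1) in Hd.
  rewrite Hw0, !Rminus_0_r in Hd.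
  pose proof (Rle_abs (w h / h)).
  assert (w h < 1 * h) by (apply Rlt_div_l; lra).
  lra.
Qed.

Lemma emden_x_neg_before (s1 : R) : exists s, s <= s1 /\ emden_x s < 0.
Proof.
  destruct w_lt_1_near_0 as [d [Hd Hw]].
  set (s := Rmin s1 (Rmin (ln d) ((ln stiffness - 1) / (alpha + 2))) - 1).
  pose proof (Rmin_l s1 (Rmin (ln d) ((ln stiffness - 1) / (alpha + 2)))).
  pose proof (Rmin_r s1 (Rmin (ln d) ((ln stiffness - 1) / (alpha + 2)))).
  pose proof (Rmin_l (ln d) ((ln stiffness - 1) / (alpha + 2))).
  pose proof (Rmin_r (ln d) ((ln stiffness - 1) / (alpha + 2))).
  exists s. split; [unfold s; lra |].
  assert (Hexp : exp s < d) by (rewrite <- (exp_ln d Hd); apply exp_increasing; unfold s; lra).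
  assert (Hlin : (alpha + 2) * s <= ln stiffness - 1).
  { apply Rle_trans with ((alpha + 2) * ((ln stiffness - 1) / (alpha + 2))).
    - apply Rmult_le_compat_l; unfold s; lra.
    - right. field. lra. }
  pose proof (Hw (exp s) (conj (exp_pos s) Hexp)).
  unfold emden_x. lra.
Qed.

Lemma emden_not_at_rest (s : R) : emden_x s = 0 -> emden_x1 s = 0 -> False.
Proof.
  intros Hx Hx1.
  destruct (emden_x_neg_before s) as [s0 [Hs0 Hneg]].
  pose proof (zero_before_rest_point _ _ _ _ damping_pos stiffness_pos
                emden_x_derive emden_x1_derive s Hx Hx1 s0 Hs0).
  lra.
Qed.

Lemma Derive_lambda_changes_sign (T : R) :
  INR n < 10 + 4 * alpha ->
  (exists t, T < t /\ 0 < Derive (lambda_of alpha w) t) /\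
  (exists t, T < t /\ Derive (lambda_of alpha w) t < 0).
Proof.
  intros Hbound.
  destruct (derivative_changes_sign _ _ _ _ damping_pos stiffness_pos
              emden_x_derive emden_x1_derive (underdamped Hbound) emden_not_at_rest T)
    as [[s [Hs Hpos]] [s' [Hs' Hneg]]].
  assert (Hfactor : forall s, 0 < lambda_of alpha w (exp s) / exp s)
    by (intros r; apply Rdiv_lt_0_compat; [apply lambda_of_pos | apply exp_pos]).
  pose proof (exp_ineq1_le s). pose proof (exp_ineq1_le s').
  split; [exists (exp s) | exists (exp s')]; rewrite Derive_lambda_exp; split; try lra.
  - apply Rmult_lt_0_compat; auto.
  - pose proof (Hfactor s'). nra.
Qed.

End EmdenFowler.

Theorem theorem3p1 (alpha : R) (n : nat) (w : R -> R) :
  0 < alpha -> (3 <= n)%nat -> INR n < 10 + 4 * alpha ->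
  gelfand_ivp_solution n alpha w ->
  infinitely_many_sign_changes (Derive (lambda_of alpha w)).
Proof.
  intros Halpha Hn Hbound [Hw0 [Hwlim Hode]].
  apply infinitely_many_sign_changes_intro; intros T;
    apply (Derive_lambda_changes_sign alpha n w Halpha Hn Hode Hw0 Hwlim T Hbound).
Qed.
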